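(* Let $\mathbf v,\mathbf w,\mathbf k,\boldsymbol\ell$ be $m$-tuples of positive integers with $k_i\ge2$ for all $i$, $\mathbf k\le\mathbf w\le\mathbf v$ and $\mathbf k\le\boldsymbol\ell\le\mathbf v$ (entrywise). Then $C(\mathbf v,\mathbf k,2)\ge C(\mathbf w,\mathbf k,2)$ and $C(\mathbf v,\mathbf k,2)\ge C(\mathbf v,\boldsymbol\ell,2)$.
   Context: For $m$-tuples $\mathbf a,\mathbf b$ of positive integers with $\mathbf b\le\mathbf a$ entrywise: let $X_1,\dots,X_m$ be pairwise disjoint sets with $|X_i|=a_i$; a block is an $m$-tuple $(B_1,\dots,B_m)$ with $B_i\subseteq X_i$, $|B_i|=b_i$; an $m$-tuple of sets $(T_1,\dots,T_m)$ is $(\mathbf a,\mathbf b,2)$-admissible if $T_i\subseteq X_i$, $|T_i|\le b_i$ and $\sum|T_i|=2$, and is contained in a block if $T_i\subseteq B_i$ for all $i$. A ${\rm GC}(\mathbf a,\mathbf b,2)$ is a finite family (repetitions allowed) of blocks containing every admissible tuple in at least one block; $C(\mathbf a,\mathbf b,2)$ is the minimum number of blocks. *)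

From mathcomp Require Import all_boot.
Set Implicit Arguments. Unset Strict Implicit. Unset Printing Implicit Defensive.

(* The ground set is the disjoint union of X_i := 'I_(a i), realized as the
   finite type of dependent pairs (i, x) with x : 'I_(a i).
   An m-tuple of sets (T_1,...,T_m) with T_i ⊆ X_i is the same thing as a
   subset of this disjoint union; its i-th component is [set x in T | tag x == i]. *)
Definition point (m : nat) (a : 'I_m -> nat) : finType := {i : 'I_m & 'I_(a i)}.

Definition part (m : nat) (a : 'I_m -> nat) (T : {set point a}) (i : 'I_m) :
  {set point a} := [set x in T | tag x == i].

Definition is_block (m : nat) (a b : 'I_m -> nat) (B : {set point a}) : bool :=
  [forall i, #|part B i| == b i].

Definition admissible (m : nat) (a b : 'I_m -> nat) (T : {set point a}) : bool :=
  [forall i, #|part T i| <= b i] && (\sum_(i < m) #|part T i| == 2).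

Definition is_GC (m : nat) (a b : 'I_m -> nat) (F : seq {set point a}) : Prop :=
  all (is_block b) F /\
  forall T : {set point a}, admissible b T -> exists2 B, B \in F & T \subset B.

Definition is_C (m : nat) (a b : 'I_m -> nat) (c : nat) : Prop :=
  (exists F : seq {set point a}, is_GC b F /\ size F = c) /\
  (forall F : seq {set point a}, is_GC b F -> c <= size F).

Arguments is_block {m} a b B.
Arguments admissible {m} a b T.
Arguments is_GC {m} a b F.
Arguments is_C {m} a b c.

(* Both inequalities come from turning a covering for the larger parameters
   into one of the same size for the smaller parameters.  Shrinking the ground
   sets from v to w: restrict each block to the copy of w inside v and pad it
   back to a block of w.  Enlarging the blocks from k to l: pad each block to
   a block of l; since k_i >= 2, an (v,l,2)-admissible tuple is
   (v,k,2)-admissible, so it is still covered. *)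

From mathcomp Require Import all_boot.

Set Implicit Arguments.
Unset Strict Implicit.
Unset Printing Implicit Defensive.

Lemma exists_card_between (T : finType) (S U : {set T}) n :
  S \subset U -> #|S| <= n <= #|U| ->
  exists B : {set T}, [&& S \subset B, B \subset U & #|B| == n].
Proof.
move=> sSU /andP [leSn lenU].
have : n - #|S| <= #|U :\: S| by rewrite cardsDS // leq_sub2r.
case/card_geqP=> s [uniq_s size_s sub_s]; pose C := [set x in s].
have sCUS : C \subset U :\: S by apply/subsetP=> x; rewrite inE; apply: sub_s.
have dSC : [disjoint S & C].
  by rewrite disjoint_sym; move: sCUS; rewrite subsetD => /andP [].
exists (S :|: C); rewrite subsetUl subUset sSU (subset_trans sCUS) ?subsetDl //=.
have [_] := leq_card_setU S C; rewrite dSC => /eqP ->.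
by rewrite cardsE (card_uniqP uniq_s) size_s subnKC.
Qed.

Section Blocks.
Variables (m : nat) (a : 'I_m -> nat).

Definition fiber (i : 'I_m) : {set point a} := [set x | tag x == i].

Lemma card_fiber i : #|fiber i| = a i.
Proof.
have -> : fiber i = [set Tagged (fun j => 'I_(a j)) y | y : 'I_(a i)].
  apply/setP=> x; rewrite !inE; apply/eqP/imsetP=> [<-|[y _ ->] //].
  by exists (tagged x); case: x.
by rewrite card_imset ?card_ord //; apply: eq_from_Tagged.
Qed.

Lemma exists_block_superset (b : 'I_m -> nat) (S : {set point a}) :
  (forall i, b i <= a i) -> (forall i, #|part S i| <= b i) ->
  exists2 B, is_block a b B & S \subset B.
Proof.
move=> le_ba le_Sb.
have ex_B i : exists B : {set point a},
    [&& part S i \subset B, B \subset fiber i & #|B| == b i].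
  apply: exists_card_between.
    by apply/subsetP=> x; rewrite !inE => /andP [].
  by rewrite le_Sb card_fiber le_ba.
pose B_ i := xchoose (ex_B i); have B_P i := xchooseP (ex_B i).
have part_B i : part [set x | x \in B_ (tag x)] i = B_ i.
  have /and3P [_ sBi _] := B_P i; apply/setP=> x; rewrite !inE.
  apply/andP/idP=> [[+ /eqP ti]|xB]; first by rewrite ti.
  by have := subsetP sBi x xB; rewrite inE => /eqP ti; rewrite ti.
exists [set x | x \in B_ (tag x)].
  by apply/forallP=> i; rewrite part_B; have /and3P [_ _ ->] := B_P i.
apply/subsetP=> x xS; rewrite inE; have /and3P [sSB _ _] := B_P (tag x).
by apply: (subsetP sSB); rewrite !inE xS eqxx.
Qed.

End Blocks.

Section Transfer.
Variables (m : nat) (a b : 'I_m -> nat) (m' : nat) (a' b' : 'I_m' -> nat).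
Variable f : {set point a'} -> {set point a}.
Hypothesis admissible_f : forall T, admissible a' b' T -> admissible a b (f T).
Hypothesis block_cover_f : forall B, is_block a b B ->
  exists2 B', is_block a' b' B' & forall T, f T \subset B -> T \subset B'.

Lemma GC_transfer F : is_GC a b F -> exists2 F', is_GC a' b' F' & size F' = size F.
Proof.
have ex_g B : exists B', is_block a b B ==>
    is_block a' b' B' && [forall T, (f T \subset B) ==> (T \subset B')].
  have [/block_cover_f [B' blockB' coverB']|_] := boolP (is_block a b B).
    by exists B'; rewrite blockB'; apply/forallP=> T; apply/implyP/coverB'.
  by exists set0.
pose g B := xchoose (ex_g B).
have g_cover B : is_block a b B ->
    is_block a' b' (g B) && [forall T, (f T \subset B) ==> (T \subset g B)].
  by move=> blockB; have /implyP := xchooseP (ex_g B); apply.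
move=> [/allP blocksF coverF]; exists (map g F); last exact: size_map.
split.
  by apply/allP=> _ /mapP [B BF ->]; case/andP: (g_cover B (blocksF B BF)).
move=> T /admissible_f /coverF [B BF sfTB]; exists (g B); first exact: map_f.
case/andP: (g_cover B (blocksF B BF)) => _ /forallP /(_ T) /implyP.
exact.
Qed.

Lemma C_transfer c c' : is_C a b c -> is_C a' b' c' -> c' <= c.
Proof.
move=> [[F [GC_F <-]] _] [_ minimal'].
by have [F' GC_F' <-] := GC_transfer GC_F; apply: minimal'.
Qed.

End Transfer.

Section WidenGround.
Variables (m : nat) (w v : 'I_m -> nat).
Hypothesis le_wv : forall i, w i <= v i.

Definition widen_point (x : point w) : point v :=
  Tagged (fun i => 'I_(v i)) (widen_ord (le_wv (tag x)) (tagged x)).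

Lemma widen_point_inj : injective widen_point.
Proof.
case=> i y [j z] /eqP; rewrite -tag_eqE /tag_eq /=.
case/andP=> /eqP eq_ij; subst j; rewrite tagged_asE => /eqP /(congr1 val) eq_yz.
by congr existT; apply: val_inj.
Qed.

Lemma part_widen (T : {set point w}) i :
  part (widen_point @: T) i = widen_point @: part T i.
Proof.
apply/setP=> x; rewrite !inE; apply/andP/imsetP=> [[/imsetP [y yT ->] ti]|].
  by exists y; rewrite // !inE yT.
by case=> y; rewrite !inE => /andP [yT ti] ->; rewrite imset_f.
Qed.

Lemma card_part_widen (T : {set point w}) i :
  #|part (widen_point @: T) i| = #|part T i|.
Proof. by rewrite part_widen card_imset //; apply: widen_point_inj. Qed.

Lemma card_part_preimset_widen (B : {set point v}) i :
  #|part (widen_point @^-1: B) i| <= #|part B i|.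
Proof.
rewrite -card_part_widen; apply/subset_leq_card/subsetP=> x.
by rewrite !inE => /andP [/imsetP [y] /[!inE] yB -> ->]; rewrite yB.
Qed.

Lemma C_le_widen_ground (k : 'I_m -> nat) c c' :
  (forall i, k i <= w i) -> is_C v k c -> is_C w k c' -> c' <= c.
Proof.
move=> le_kw; apply: (C_transfer (f := fun T => widen_point @: T)).
  move=> T /andP [/forallP le_Tk sumT]; apply/andP; split.
    by apply/forallP=> i; rewrite card_part_widen le_Tk.
  by under eq_bigr do rewrite card_part_widen; exact: sumT.
move=> B /forallP blockB.
have [|B' blockB' sB'] := exists_block_superset (S := widen_point @^-1: B) le_kw.
  by move=> i; rewrite -(eqP (blockB i)) card_part_preimset_widen.
exists B' => // T sTB; apply: subset_trans sB'; apply/subsetP=> x xT.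
by rewrite inE (subsetP sTB) ?imset_f.
Qed.

End WidenGround.

Lemma C_le_enlarge_block (m : nat) (v k l : 'I_m -> nat) c c' :
  (forall i, 2 <= k i) -> (forall i, k i <= l i) -> (forall i, l i <= v i) ->
  is_C v k c -> is_C v l c' -> c' <= c.
Proof.
move=> k_ge2 le_kl le_lv; apply: (C_transfer (f := id)).
  move=> T /andP [_ /eqP sumT]; apply/andP; split; last by rewrite sumT.
  apply/forallP=> i; apply: leq_trans (k_ge2 i).
  by rewrite -sumT (bigD1 i) //= leq_addr.
move=> B /forallP blockB.
have [|B' blockB' sBB'] := exists_block_superset (S := B) le_lv.
  by move=> i; rewrite (eqP (blockB i)) le_kl.
by exists B' => // T /subset_trans; apply.
Qed.

Theorem theorem3p17 (m : nat) (v w k l : 'I_m -> nat) :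
  (forall i, 0 < v i) -> (forall i, 0 < w i) -> (forall i, 0 < k i) -> (forall i, 0 < l i) ->
  (forall i, 2 <= k i) ->
  (forall i, k i <= w i) -> (forall i, w i <= v i) ->
  (forall i, k i <= l i) -> (forall i, l i <= v i) ->
  forall cvk cwk cvl : nat,
    is_C v k cvk -> is_C w k cwk -> is_C v l cvl ->
    cwk <= cvk /\ cvl <= cvk.
Proof.
move=> _ _ _ _ k_ge2 le_kw le_wv le_kl le_lv cvk cwk cvl Cvk Cwk Cvl; split.
  exact: (C_le_widen_ground le_wv le_kw Cvk Cwk).
exact: (C_le_enlarge_block k_ge2 le_kl le_lv Cvk Cvl).
Qed.
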